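(* For all integers $n\ge 1$ and $q\ge 2$, $N(H(n,q))=n(q-1)$.
   Context: The Hamming graph $H(n,q)$ has as vertices all words of length $n$ over the alphabet $\{1,\dots,q\}$, two words being adjacent iff they differ in exactly one coordinate. A $t$-address is a $t$-tuple with entries in $\{0,a,b\}$ (three distinct symbols). An addressing of length $t$ of a connected graph $G$ is an assignment of $t$-addresses to the vertices such that for any two vertices $u,v$, the graph distance $d(u,v)$ equals the number of coordinates in which one of the two addresses equals $a$ and the other equals $b$. $N(G)$ is the minimum $t$ such that $G$ has an addressing of length $t$. *)

From mathcomp Require Import all_boot.
Set Implicit Arguments. Unset Strict Implicit. Unset Printing Implicit Defensive.

(* A simple graph: vertex finType T with a (symmetric, irreflexive) relation e. *)

Definition is_dist (T : finType) (e : rel T) (u v : T) (d : nat) : Prop :=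
  (exists p : seq T, [/\ path e u p, last u p = v & size p = d]) /\
  (forall p : seq T, path e u p -> last u p = v -> d <= size p).

Definition connected_graph (T : finType) (e : rel T) : Prop :=
  forall u v : T, exists p : seq T, path e u p /\ last u p = v.

Inductive sym := S0 | Sa | Sb.

Definition ab_pair (x y : sym) : bool :=
  match x, y with
  | Sa, Sb | Sb, Sa => true
  | _, _ => false
  end.

Definition addr_dist (t : nat) (x y : 'I_t -> sym) : nat :=
  #|[pred i : 'I_t | ab_pair (x i) (y i)]|.

Definition addressing (T : finType) (e : rel T) (t : nat) (f : T -> 'I_t -> sym) : Prop :=
  forall u v : T, is_dist e u v (addr_dist (f u) (f v)).

Definition has_addressing (T : finType) (e : rel T) (t : nat) : Prop :=
  exists f : T -> 'I_t -> sym, addressing e f.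

Definition N_is (T : finType) (e : rel T) (m : nat) : Prop :=
  has_addressing e m /\ forall t, has_addressing e t -> m <= t.

Definition hamming_word (n q : nat) := {ffun 'I_n -> 'I_q}.
Definition hamming_adj (n q : nat) : rel (hamming_word n q) :=
  fun x y => #|[pred i : 'I_n | x i != y i]| == 1.

From mathcomp Require Import all_boot all_algebra zify.
Set Implicit Arguments. Unset Strict Implicit. Unset Printing Implicit Defensive.
Import GRing.Theory Num.Theory.

(* Write a letter x < q as the word of length q - 1 carrying b below position x,
   a at position x and 0 above it: two distinct letters then form an {a,b} pair in
   exactly one position, so concatenating over the n coordinates gives an
   addressing of length n(q-1).
   Conversely, an addressing of length t writes the distance matrix as
   D = sum_k (a_k b_k^T + b_k a_k^T), with a_k, b_k the indicator vectors of the
   words whose address has a, resp. b, in position k; so X^T D X = 0 whenever X is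
   orthogonal to every a_k. But if X has total mass 0, then
   X^T D X = - sum_(i,s) m_(i,s)^2, where m_(i,s) is the mass of X on the words with
   letter s at position i. If t < n(q-1), some nonzero combination X of the vectors
   delta_e(i,s) - delta_0, with e(i,s) the word whose only nonzero letter is s at
   position i, is orthogonal to all the a_k, and its marginal m_(i,s) is the
   coefficient of e(i,s), which therefore vanishes. *)

Lemma card_sum_bool (T : finType) (P : pred T) : #|P| = \sum_x P x.
Proof.
rewrite -sum1_card big_mkcond; apply: eq_bigr => x _.
by rewrite [x \in P]/(in_mem _ _) /=; case: (P x).
Qed.

Lemma is_dist_unique (T : finType) (e : rel T) u v d1 d2 :
  is_dist e u v d1 -> is_dist e u v d2 -> d1 = d2.
Proof.
move=> [[p1 [e1 l1 <-]] min1] [[p2 [e2 l2 <-]] min2].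
by apply/eqP; rewrite eqn_leq min1 ?min2.
Qed.

Section HammingDistance.
Variables (I : finType) (A : eqType).

Definition hamming_dist (u v : {ffun I -> A}) : nat := \sum_i (u i != v i).

Lemma hamming_dist0 u : hamming_dist u u = 0.
Proof. by rewrite /hamming_dist big1 // => i _; rewrite eqxx. Qed.

Lemma hamming_dist_triangle u w v :
  hamming_dist u v <= hamming_dist u w + hamming_dist w v.
Proof.
rewrite /hamming_dist -big_split /=; apply: leq_sum => i _.
by case: (u i =P w i) => [->|_]; rewrite ?leq_addl // (leq_trans (leq_b1 _)) ?leq_addr.
Qed.

Lemma hamming_dist_step (u v : {ffun I -> A}) i : u i != v i ->
  exists2 u', hamming_dist u u' = 1 & hamming_dist u v = (hamming_dist u' v).+1.
Proof.
move=> uv; exists [ffun j => if j == i then v i else u j]; rewrite /hamming_dist.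
  rewrite (bigD1 i) //= ffunE eqxx uv big1 // => j /negbTE ji.
  by rewrite ffunE ji eqxx.
rewrite (bigD1 i) // [in RHS](bigD1 i) //= ffunE !eqxx uv; congr _.+1.
by apply: eq_bigr => j /negbTE ji; rewrite ffunE ji.
Qed.

End HammingDistance.

Section HammingGraph.
Variables n q : nat.
Local Notation word := (hamming_word n q).

Lemma hamming_adjE (u v : word) : hamming_adj u v = (hamming_dist u v == 1).
Proof. by rewrite /hamming_adj card_sum_bool. Qed.

Lemma hamming_dist_path (u : word) p :
  path (@hamming_adj n q) u p -> hamming_dist u (last u p) <= size p.
Proof.
elim: p u => [|w p IHp] u /=; first by rewrite hamming_dist0.
rewrite hamming_adjE => /andP[/eqP uw wp].
by rewrite (leq_trans (hamming_dist_triangle _ w _)) // uw add1n ltnS IHp.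
Qed.

Lemma hamming_geodesic (u v : word) :
  exists p, [/\ path (@hamming_adj n q) u p, last u p = v & size p = hamming_dist u v].
Proof.
move Ed: (hamming_dist u v) => d; elim: d u Ed => [|d IHd] u Ed.
  exists [::]; split=> //; apply/ffunP => i; apply/eqP/negbNE.
  by move/eqP: Ed; rewrite sum_nat_eq0 => /forallP/(_ i); rewrite eqb0.
have [i uv] : exists i, u i != v i.
  apply/existsP; apply: contra_eqT Ed => /existsPn uv.
  by rewrite /hamming_dist big1 // => i _; rewrite (negbTE (uv i)).
have [u' uu' Ed'] := hamming_dist_step uv.
have [p [u'p lp sp]] := IHd u' (succn_inj (etrans (esym Ed') Ed)).
by exists (u' :: p); rewrite /= hamming_adjE uu' u'p sp.
Qed.

Lemma is_dist_hamming (u v : word) : is_dist (@hamming_adj n q) u v (hamming_dist u v).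
Proof.
split; first by have [p [? ? ?]] := hamming_geodesic u v; exists p.
by move=> p /hamming_dist_path; move=> + <-.
Qed.

End HammingGraph.

Definition unary_code (x c : nat) : sym :=
  if c == x then Sa else if c < x then Sb else S0.

Lemma ab_pair_unary_code x y c :
  ab_pair (unary_code x c) (unary_code y c) = (x != y) && (c == minn x y).
Proof.
rewrite /unary_code /minn.
by case: (ltngtP x y) => xy; case: (ltngtP c x) => cx; case: (ltngtP c y) => cy //=; lia.
Qed.

Lemma sum_ab_pair_unary_code p x y : x <= p -> y <= p ->
  \sum_(c < p) ab_pair (unary_code x c) (unary_code y c) = (x != y).
Proof.
move=> xp yp; under eq_bigr do rewrite ab_pair_unary_code.
have [_|xy] /= := eqVneq x y; first by rewrite big1.
have minp : minn x y < p by lia.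
rewrite (bigD1 (Ordinal minp)) //= eqxx big1 // => c.
by rewrite -val_eqE /= => /negbTE ->.
Qed.

Definition hamming_address n q (w : hamming_word n q.+1) : 'I_(n * q) -> sym :=
  fun k => mxvec (\matrix_(i, c) unary_code (w i) c) 0%R k.

Lemma addr_dist_hamming_address n q (u v : hamming_word n q.+1) :
  addr_dist (hamming_address u) (hamming_address v) = hamming_dist u v.
Proof.
transitivity (\sum_i \sum_(c < q) ab_pair (unary_code (u i) c) (unary_code (v i) c)).
  rewrite /addr_dist card_sum_bool (reindex _ (curry_mxvec_bij n q)) pair_bigA.
  by apply: eq_big => [//|[i c] _]; rewrite /= /hamming_address !mxvecE !mxE.
by apply: eq_bigr => i _; rewrite sum_ab_pair_unary_code // -ltnS.
Qed.

Lemma hamming_has_addressing n q : has_addressing (@hamming_adj n q.+1) (n * q).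
Proof.
exists (@hamming_address n q) => u v.
by rewrite addr_dist_hamming_address; apply: is_dist_hamming.
Qed.

Definition is_a (s : sym) : bool := if s is Sa then true else false.
Definition is_b (s : sym) : bool := if s is Sb then true else false.

Lemma ab_pair_nat x y : ab_pair x y = (is_a x * is_b y + is_b x * is_a y)%N :> nat.
Proof. by case: x; case: y. Qed.

Section QuadraticForms.
Variable R : comPzRingType.
Local Open Scope ring_scope.

Lemma sum_bilinear (T K : finType) (X : T -> R) (g h : T -> K -> R) :
  \sum_u \sum_v X u * X v * (\sum_k g u k * h v k) =
  \sum_k (\sum_u X u * g u k) * (\sum_v X v * h v k).
Proof.
under eq_bigr do under eq_bigr do rewrite mulr_sumr.
under eq_bigr do rewrite exchange_big.
rewrite exchange_big; apply: eq_bigr => k _; rewrite mulr_suml.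
by apply: eq_bigr => u _; rewrite mulr_sumr; apply: eq_bigr => v _; rewrite mulrACA.
Qed.

Lemma addr_dist_form_eq0 (T : finType) t (f : T -> 'I_t -> sym) (X : T -> R) :
  (forall k, \sum_w X w * (is_a (f w k))%:R = 0) ->
  \sum_u \sum_v X u * X v * (addr_dist (f u) (f v))%:R = 0.
Proof.
move=> Xa.
have addr_distE u v : (addr_dist (f u) (f v))%:R =
    \sum_k (is_a (f u k))%:R * (is_b (f v k))%:R
  + \sum_k (is_b (f u k))%:R * (is_a (f v k))%:R :> R.
  rewrite /addr_dist card_sum_bool natr_sum -big_split; apply: eq_bigr => k _ /=.
  by rewrite ab_pair_nat natrD !natrM.
under eq_bigr do under eq_bigr do rewrite addr_distE mulrDr.
under eq_bigr do rewrite big_split.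
by rewrite big_split /= !sum_bilinear !big1 ?addr0 // => k _; rewrite Xa ?mul0r ?mulr0.
Qed.

Definition marginal (I A : finType) (X : {ffun I -> A} -> R) (i : I) (s : A) : R :=
  \sum_w X w * (w i == s)%:R.

Lemma sum_eq_mul_eq (A : finType) (x y : A) :
  \sum_s (x == s)%:R * (y == s)%:R = (x == y)%:R :> R.
Proof.
rewrite (bigD1 x) //= eqxx mul1r big1 ?addr0 => [|s /negbTE xs].
  by rewrite eq_sym.
by rewrite eq_sym xs mul0r.
Qed.

Lemma hamming_dist_form (I A : finType) (X : {ffun I -> A} -> R) : \sum_w X w = 0 ->
  \sum_u \sum_v X u * X v * (hamming_dist u v)%:R =
  - \sum_(p : I * A) marginal X p.1 p.2 ^+ 2.
Proof.
move=> X0.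
have hamming_distE u v : (hamming_dist u v)%:R =
    #|I|%:R - \sum_(p : I * A) (u p.1 == p.2)%:R * (v p.1 == p.2)%:R :> R.
  rewrite -(pair_bigA _ (fun i s => (u i == s)%:R * (v i == s)%:R)) /=.
  rewrite /hamming_dist natr_sum -sumr_const -sumrB.
  apply: eq_bigr => i _; rewrite sum_eq_mul_eq.
  by case: (u i == v i); rewrite ?subrr ?subr0.
under eq_bigr do under eq_bigr do rewrite hamming_distE mulrBr.
under eq_bigr do rewrite sumrB.
rewrite sumrB sum_bilinear big1 ?sub0r => [|u _]; last first.
  by rewrite -mulr_suml -mulr_sumr X0 mulr0 mul0r.
by congr (- _); apply: eq_bigr => p _; rewrite expr2.
Qed.

Lemma sum_diff_deltas (T J : finType) (y : J -> R) (e : J -> T) (z : T) (g : T -> R) :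
  \sum_w (\sum_j y j * ((w == e j)%:R - (w == z)%:R)) * g w =
  \sum_j y j * (g (e j) - g z).
Proof.
have sum_delta (a : T) : \sum_w (w == a)%:R * g w = g a.
  by rewrite (bigD1 a) //= eqxx mul1r big1 ?addr0 // => w /negbTE ->; rewrite mul0r.
under eq_bigr do rewrite mulr_suml.
rewrite exchange_big; apply: eq_bigr => j _.
under eq_bigr do rewrite -mulrA mulrBl.
by rewrite -mulr_sumr sumrB !sum_delta.
Qed.

End QuadraticForms.

Section LowerBound.
Local Open Scope ring_scope.

Lemma hamming_addressing_marginals_eq0 (R : realDomainType) n q t
    (f : hamming_word n q -> 'I_t -> sym) (X : hamming_word n q -> R) :
  addressing (@hamming_adj n q) f -> \sum_w X w = 0 ->
  (forall k, \sum_w X w * (is_a (f w k))%:R = 0) ->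
  forall i s, marginal X i s = 0.
Proof.
move=> f_addr X0 Xa i s.
have addr_distE u v : addr_dist (f u) (f v) = hamming_dist u v.
  exact: is_dist_unique (f_addr u v) (is_dist_hamming u v).
have := addr_dist_form_eq0 Xa.
under eq_bigr do under eq_bigr do rewrite addr_distE.
rewrite hamming_dist_form // => /eqP; rewrite oppr_eq0 => /eqP.
move/(psumr_eq0P (fun p _ => sqr_ge0 _))/(_ (i, s) isT)/eqP.
by rewrite sqrf_eq0 => /eqP.
Qed.

Lemma homogeneous_system_nontrivial (F : fieldType) (J : finType) t
    (a : J -> 'I_t -> F) : (t < #|J|)%N ->
  exists2 y : J -> F, exists j, y j != 0 & forall k, \sum_j y j * a j k = 0.
Proof.
move=> ltJ; pose M : 'M[F]_(#|J|, t) := \matrix_(j, k) a (enum_val j) k.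
have /rowV0Pn[v /sub_kermxP vM0 v_nz] : kermx M != 0.
  by rewrite kermx_eq0 -row_leq_rank -ltnNge (leq_ltn_trans (rank_leq_col M)).
exists (fun j => v 0 (enum_rank j)).
  have [j vj] : exists j, v 0 j != 0.
    apply/existsP; apply: contraNT v_nz => /existsPn v0.
    by apply/eqP/rowP => j; rewrite mxE; apply/eqP/negbNE/v0.
  by exists (enum_val j); rewrite enum_valK.
move=> k; transitivity ((v *m M) 0 k); last by rewrite vM0 mxE.
rewrite mxE (reindex _ (onW_bij _ (@enum_val_bij J))).
by apply: eq_bigr => j _; rewrite enum_valK mxE.
Qed.

Lemma hamming_addressing_length n q t (f : hamming_word n q.+1 -> 'I_t -> sym) :
  addressing (@hamming_adj n q.+1) f -> (n * q <= t)%N.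
Proof.
move=> f_addr; rewrite leqNgt; apply/negP => lt_t_nq.
pose z : hamming_word n q.+1 := [ffun _ => ord0].
pose e (p : 'I_n * 'I_q) : hamming_word n q.+1 :=
  [ffun i => if i == p.1 then lift ord0 p.2 else ord0].
pose is_a_at w k : rat := (is_a (f w k))%:R.
have ltJ : (t < #|{: 'I_n * 'I_q}|)%N by rewrite card_prod !card_ord.
have [y [[i s] y_nz] y_ker] :=
  homogeneous_system_nontrivial (fun p k => is_a_at (e p) k - is_a_at z k) ltJ.
pose X w := \sum_p y p * ((w == e p)%:R - (w == z)%:R).
have X0 : \sum_w X w = 0.
  have := sum_diff_deltas y e z (fun _ => 1).
  under eq_bigr do rewrite mulr1; move=> ->.
  by rewrite big1 // => p _; rewrite subrr mulr0.
have Xa k : \sum_w X w * is_a_at w k = 0 by rewrite sum_diff_deltas y_ker.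
have e_at p : (e p i == lift ord0 s) = (p == (i, s)).
  case: p => i' s'; rewrite ffunE xpair_eqE /=.
  have [_|_] := eqVneq i i'; first exact: (inj_eq lift_inj).
  exact: negbTE (neq_lift _ _).
have z_at : (z i == lift ord0 s) = false by rewrite ffunE (negbTE (neq_lift _ _)).
have := hamming_addressing_marginals_eq0 f_addr X0 Xa i (lift ord0 s).
rewrite /marginal sum_diff_deltas; under eq_bigr do rewrite e_at z_at subr0.
rewrite (bigD1 (i, s)) //= eqxx mulr1 big1 ?addr0 => [|p /negbTE ->]; last exact: mulr0.
by move/eqP; apply/negP.
Qed.

End LowerBound.

Lemma N_is_hamming n q : N_is (@hamming_adj n q.+1) (n * q).
Proof.
split; first exact: hamming_has_addressing.
by move=> t [f /hamming_addressing_length].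
Qed.

Theorem theorem13 (n q : nat) :
  1 <= n -> 2 <= q -> N_is (@hamming_adj n q) (n * (q - 1)).
Proof. by move=> _; case: q => [//|q] _; rewrite subn1; exact: N_is_hamming. Qed.
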